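(* Let $\mathbb{F}$ be a field, let $A=(a_{ij})\in M_n(\mathbb{F})$, and let $S_A\colon M_n(\mathbb{F})\to M_n(\mathbb{F})$ be the Schur map $S_A(B)=A\circ B$. Then the following are equivalent: (i) $S_A$ is a nonzero homomorphism (with respect to matrix multiplication); (ii) there is an invertible diagonal matrix $\Lambda\in M_n(\mathbb{F})$ such that $S_A(X)=\Lambda X\Lambda^{-1}$ for all $X\in M_n(\mathbb{F})$; (iii) $a_{ij}=a_{ik}a_{kj}$ and $a_{ii}=1$ for all $1\le i,j,k\le n$.
   Context: $A\circ B=(a_{ij}b_{ij})$ denotes the entrywise (Schur) product of matrices over $\mathbb{F}$. *)

From mathcomp Require Import all_boot all_order all_algebra.
Set Implicit Arguments. Unset Strict Implicit. Unset Printing Implicit Defensive.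
Import GRing.Theory.
Local Open Scope ring_scope.

Definition schur (F : fieldType) (n : nat) (A B : 'M[F]_n) : 'M[F]_n :=
  \matrix_(i, j) (A i j * B i j).

Definition schur_map (F : fieldType) (n : nat) (A : 'M[F]_n) : 'M[F]_n -> 'M[F]_n :=
  fun B => schur A B.

Definition mul_hom (F : fieldType) (n : nat) (f : 'M[F]_n -> 'M[F]_n) : Prop :=
  forall X Y : 'M[F]_n, f (X *m Y) = f X *m f Y.

Definition nonzero_map (F : fieldType) (n : nat) (f : 'M[F]_n -> 'M[F]_n) : Prop :=
  exists X : 'M[F]_n, f X != 0.

From mathcomp Require Import all_boot all_order all_algebra.
From mathcomp Require Import ring.
Local Open Scope ring_scope.
Import GRing.Theory.
Set Implicit Arguments. Unset Strict Implicit. Unset Printing Implicit Defensive.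

(* Testing S_A on matrix units gives the cocycle identity a_ij = a_ik a_kj,
   hence a_kk = a_kk^2; a_kk = 0 would force A = 0, so a_kk = 1.  Conversely,
   the cocycle identity through a fixed index o writes a_ij = a_io a_oj with
   a_oj = a_jo^-1, i.e. S_A is conjugation by diag(a_io), which is a nonzero
   multiplicative map. *)

Lemma diag_mx_unitmx_inv (F : fieldType) (n : nat) (d e : 'rV[F]_n) :
  (forall i, d 0 i * e 0 i = 1) ->
  diag_mx d \in unitmx /\ invmx (diag_mx d) = diag_mx e.
Proof.
move=> de1; have de : diag_mx d *m diag_mx e = 1%:M.
  rewrite mulmx_diag -diag_const_mx; congr diag_mx.
  by apply/rowP => i; rewrite !mxE de1.
have [d_unit _] := mulmx1_unit de.
by split=> //; rewrite -[RHS](mulKmx d_unit) de mulmx1.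
Qed.

Lemma unitmx_conj_mul (F : fieldType) (n : nat) (L X Y : 'M[F]_n) :
  L \in unitmx ->
  L *m (X *m Y) *m invmx L = (L *m X *m invmx L) *m (L *m Y *m invmx L).
Proof. by move=> L_unit; rewrite !mulmxA mulmxKV. Qed.

Lemma scalar_mx1_neq0 (F : fieldType) (n : nat) : (0 < n)%N -> (1%:M : 'M[F]_n) != 0.
Proof.
move=> hn; apply/eqP => /matrixP /(_ (Ordinal hn) (Ordinal hn)) /eqP.
by rewrite !mxE eqxx oner_eq0.
Qed.

Section SchurMap.

Variables (F : fieldType) (n : nat) (A : 'M[F]_n).

Lemma schur_map_delta_mx (i j : 'I_n) :
  schur_map A (delta_mx i j) = A i j *: delta_mx i j.
Proof.
apply/matrixP => r s; rewrite !mxE.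
by case: eqP => [->|]; case: eqP => [->|]; rewrite ?mulr0.
Qed.

Lemma schur_map_eq0 (X : 'M[F]_n) : (forall i j, A i j = 0) -> schur_map A X = 0.
Proof. by move=> A0; apply/matrixP => i j; rewrite !mxE A0 mul0r. Qed.

Lemma mul_hom_schur_cocycle :
  mul_hom (schur_map A) -> forall i j k : 'I_n, A i j = A i k * A k j.
Proof.
move=> hom i j k; have := hom (delta_mx i k) (delta_mx k j).
rewrite mul_delta_mx !schur_map_delta_mx -scalemxAl -scalemxAr scalerA mul_delta_mx.
by move=> /matrixP /(_ i j); rewrite !mxE !eqxx !mulr1.
Qed.

Lemma schur_cocycle_diag1 :
  (forall i j k : 'I_n, A i j = A i k * A k j) -> (exists X, schur_map A X != 0) ->
  forall k : 'I_n, A k k = 1.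
Proof.
move=> cocycle [X SX] k.
have Akk0 : A k k != 0.
  apply: contraNneq SX => Akk0; apply/eqP/schur_map_eq0 => i j.
  by rewrite (cocycle i j k) (cocycle i k k) (cocycle k j k) Akk0 !(mulr0, mul0r).
by apply: (mulIf Akk0); rewrite -cocycle mul1r.
Qed.

Lemma schur_cocycle_conj (o : 'I_n) :
  (forall i j k : 'I_n, A i j = A i k * A k j) -> (forall i : 'I_n, A i i = 1) ->
  forall X, schur_map A X = diag_mx (\row_k A k o) *m X *m diag_mx (\row_k A o k).
Proof.
move=> cocycle diag1 X; apply/matrixP => i j.
by rewrite mul_mx_diag mul_diag_mx !mxE (cocycle i j o); ring.
Qed.

End SchurMap.

Lemma schur_hom_cocycle (F : fieldType) (n : nat) (A : 'M[F]_n) :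
  nonzero_map (schur_map A) /\ mul_hom (schur_map A) ->
  (forall i j k : 'I_n, A i j = A i k * A k j) /\ (forall i : 'I_n, A i i = 1).
Proof.
move=> [nz hom]; have cocycle := mul_hom_schur_cocycle hom.
by split=> //; apply: schur_cocycle_diag1.
Qed.

Lemma schur_cocycle_diag_conj (F : fieldType) (n : nat) (A : 'M[F]_n) (hn : (0 < n)%N) :
  (forall i j k : 'I_n, A i j = A i k * A k j) /\ (forall i : 'I_n, A i i = 1) ->
  exists L : 'M[F]_n, [/\ is_diag_mx L, L \in unitmx &
    forall X : 'M[F]_n, schur_map A X = L *m X *m invmx L].
Proof.
move=> [cocycle diag1]; set o := Ordinal hn.
have [L_unit L_inv] : diag_mx (\row_k A k o) \in unitmx /\
    invmx (diag_mx (\row_k A k o)) = diag_mx (\row_k A o k).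
  by apply: diag_mx_unitmx_inv => k; rewrite !mxE -cocycle diag1.
exists (diag_mx (\row_k A k o)); split=> // X.
by rewrite L_inv; apply: schur_cocycle_conj.
Qed.

Lemma schur_conj_hom (F : fieldType) (n : nat) (A : 'M[F]_n) (hn : (0 < n)%N) :
  (exists L : 'M[F]_n, [/\ is_diag_mx L, L \in unitmx &
    forall X : 'M[F]_n, schur_map A X = L *m X *m invmx L]) ->
  nonzero_map (schur_map A) /\ mul_hom (schur_map A).
Proof.
move=> [L [_ L_unit SA]]; split=> [|X Y]; last by rewrite !SA unitmx_conj_mul.
by exists 1%:M; rewrite SA mulmx1 mulmxV // scalar_mx1_neq0.
Qed.

Theorem proposition3p1 (F : fieldType) (n : nat) (A : 'M[F]_n) (hn : (0 < n)%N) :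
  [/\ (nonzero_map (schur_map A) /\ mul_hom (schur_map A)) <->
        (exists L : 'M[F]_n, [/\ is_diag_mx L, L \in unitmx &
            forall X : 'M[F]_n, schur_map A X = L *m X *m invmx L]),
      (exists L : 'M[F]_n, [/\ is_diag_mx L, L \in unitmx &
            forall X : 'M[F]_n, schur_map A X = L *m X *m invmx L]) <->
        ((forall i j k : 'I_n, A i j = A i k * A k j) /\ (forall i : 'I_n, A i i = 1)) &
      ((forall i j k : 'I_n, A i j = A i k * A k j) /\ (forall i : 'I_n, A i i = 1)) <->
        (nonzero_map (schur_map A) /\ mul_hom (schur_map A))].
Proof.
have i_iii := @schur_hom_cocycle F n A.
have iii_ii := schur_cocycle_diag_conj hn.
have ii_i := schur_conj_hom hn.
by split; split; auto.
Qed.
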